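(* Consider the following setting. Participants communicate over a synchronous network: any message sent by an honest participant to another participant (possibly over multiple hops) is delivered within time $\Delta$. A committee has $n = 3f+1$ members, at most $f$ of which are Byzantine (controlled by a single adversary); the remaining members and all other non-adversarial miners are honest and follow the protocol. When an honest committee member commits a consensus decision (in particular a reconfiguration decision) in slot $s$ of view $(c,e,v)$ with value digest $h$, it sends a signed message $\langle\langle \mathsf{notify}, c,e,v,s,h\rangle, \mathcal{C}\rangle$ (where $\mathcal{C}$ is a commit certificate consisting of $2f+1$ matching signed commit messages) to all other committee members and propagates the decision on the peer-to-peer network to all miners. Upon receiving such a $\mathsf{notify}$ message, an honest member commits $h$ and, if it has not already done so, sends and propagates its own $\mathsf{notify}$ message in the same way. The signed inner part $\langle \mathsf{notify}, c,e,v,s,h\rangle$ is called a $\mathsf{notify}$ header. The proof-of-work puzzle for the next configuration, $\mathsf{puzzle}(c+1)$, is defined to be any set of $f+1$ $\mathsf{notify}$ headers (from distinct committee members) for the last reconfiguration decision. Then the adversary learns a puzzle at most $2\Delta$ time earlier than honest miners; that is, if the adversary is able to assemble $\mathsf{puzzle}(c+1)$ at time $t$, then every honest miner is able to assemble $\mathsf{puzzle}(c+1)$ by time $t + 2\Delta$.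
   Context: Signatures are unforgeable, so a $\mathsf{notify}$ header signed by an honest member can only exist if that honest member produced it. Honest members are capable of delivering messages to all other honest participants (members and miners) within $\Delta$. *)

From mathcomp Require Import all_boot all_order all_algebra.
Set Implicit Arguments. Unset Strict Implicit. Unset Printing Implicit Defensive.
Import Order.TTheory GRing.Theory Num.Theory.
Local Open Scope ring_scope.

(* [has m] : "a valid notify header (for the fixed reconfiguration decision)
   signed by committee member m is held".  puzzle(c+1) can be assembled iff
   f+1 such headers from distinct committee members are held. *)
Definition can_assemble_puzzle (M : finType) (f : nat) (has : M -> Prop) : Prop :=
  exists S : {set M}, #|S| = f.+1 /\ (forall m, m \in S -> has m).

(* Among the f+1 headers the adversary holds at time t, at least one is signed by
   an honest member m0, since at most f members are Byzantine; by unforgeability m0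
   sent its notify at some t0 <= t.  Within Delta every honest member has received
   it and hence sent its own notify, and within a further Delta every honest miner
   holds the headers of all honest members.  There are at least 2f+1 >= f+1 honest
   members, so by time t + 2 Delta every honest miner can assemble the puzzle. *)
From mathcomp Require Import all_boot all_order all_algebra.
From mathcomp Require Import zify lra.
Set Implicit Arguments. Unset Strict Implicit. Unset Printing Implicit Defensive.
Import Order.TTheory GRing.Theory Num.Theory.
Local Open Scope ring_scope.

Lemma exists_subset_card (T : finType) (A : {set T}) (k : nat) :
  (k <= #|A|)%N -> exists S : {set T}, #|S| = k /\ S \subset A.
Proof.
move=> le_k_A; exists [set x in take k (enum A)]; split.
  have uniq_take : uniq (take k (enum A)) by rewrite take_uniq ?enum_uniq.
  by rewrite cardsE (card_uniqP uniq_take) size_takel // -cardE.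
by apply/subsetP=> x; rewrite inE => /mem_take; rewrite mem_enum.
Qed.

Lemma meet_of_card_compl_lt (T : finType) (S H : {set T}) :
  (#|~: H| < #|S|)%N -> exists2 x, x \in S & x \in H.
Proof.
move=> lt_HC_S; have /set0Pn[x] : S :&: H != set0.
  rewrite setI_eq0 disjoints_subset; apply: contraTN lt_HC_S => /subset_leq_card.
  by rewrite -leqNgt.
by rewrite inE => /andP[]; exists x.
Qed.

Lemma honest_quorum (T : finType) (H : {set T}) (f : nat) :
  #|T| = (3 * f).+1 -> (#|~: H| <= f)%N -> (f.+1 <= #|H|)%N.
Proof. by move=> card_T le_HC_f; have := cardsC H; rewrite card_T; lia. Qed.

Section NotifyRelay.

Variables (R : realDomainType) (M Miner : Type) (Delta : R).
Variables (honest : {pred M}) (honest_miner : Miner -> Prop).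
Variables (sent : M -> R -> Prop) (mrecv : M -> M -> R -> Prop).
Variable minrecv : Miner -> M -> R -> Prop.

Hypothesis deliver_members : forall m t0, m \in honest -> sent m t0 ->
  forall m', m' \in honest -> mrecv m' m (t0 + Delta).
Hypothesis deliver_miners : forall m t0, m \in honest -> sent m t0 ->
  forall x, honest_miner x -> minrecv x m (t0 + Delta).
Hypothesis relay : forall m' m t, m' \in honest -> mrecv m' m t -> sent m' t.
Hypothesis minrecv_mono : forall x m t t', t <= t' -> minrecv x m t -> minrecv x m t'.

Lemma honest_notify_reaches_miners m0 t0 t m x :
  m0 \in honest -> sent m0 t0 -> t0 <= t -> m \in honest -> honest_miner x ->
  minrecv x m (t + 2 * Delta).
Proof.
move=> hm0 sent0 le_t0_t hm hx.
have sent_m : sent m (t0 + Delta).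
  exact: relay hm (deliver_members hm0 sent0 hm).
apply: minrecv_mono (deliver_miners hm sent_m hx); lra.
Qed.

End NotifyRelay.

Theorem lemma1 (R : realDomainType) (M : finType) (Miner : Type) (f : nat) (Delta : R)
  (honest : {set M}) (honest_miner : Miner -> Prop)
  (sent : M -> R -> Prop) (mrecv : M -> M -> R -> Prop)
  (minrecv : Miner -> M -> R -> Prop) (adv : M -> R -> Prop) :
  #|M| = (3 * f).+1 :> nat ->
  (#|~: honest| <= f)%N ->
  0 <= Delta ->
  (* unforgeable signatures: a header of an honest member exists only once it produced it *)
  (forall m t, m \in honest -> adv m t -> exists2 t0, t0 <= t & sent m t0) ->
  (* synchronous delivery to all honest members within Delta *)
  (forall m t0, m \in honest -> sent m t0 ->
     forall m', m' \in honest -> mrecv m' m (t0 + Delta)) ->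
  (* propagation to all honest miners within Delta *)
  (forall m t0, m \in honest -> sent m t0 ->
     forall x, honest_miner x -> minrecv x m (t0 + Delta)) ->
  (* protocol: an honest member receiving a notify commits and sends its own notify
     (if not done already) *)
  (forall m' m t, m' \in honest -> mrecv m' m t -> sent m' t) ->
  (* "received by time t" is monotone in t *)
  (forall x m t t', t <= t' -> minrecv x m t -> minrecv x m t') ->
  forall t, can_assemble_puzzle f (fun m => adv m t) ->
  forall x, honest_miner x ->
    can_assemble_puzzle f (fun m => minrecv x m (t + 2 * Delta)).
Proof.
move=> card_M le_byz_f _ unforgeable dlv_members dlv_miners relay mono t
  [S [card_S adv_S]] x hx.
have [m0 m0S m0h] : exists2 m0, m0 \in S & m0 \in honest.
  by apply: meet_of_card_compl_lt; rewrite card_S ltnS.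
have [t0 le_t0_t sent0] := unforgeable _ _ m0h (adv_S _ m0S).
have [Q [card_Q sub_Q]] := exists_subset_card (honest_quorum card_M le_byz_f).
exists Q; split=> // m mQ.
exact: (honest_notify_reaches_miners dlv_members dlv_miners relay mono
          m0h sent0 le_t0_t (subsetP sub_Q _ mQ) hx).
Qed.
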